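(* Let $n\ge 1$. The set $\mathcal{DM}(n)$ of all disjoint multilinear interaction expressions in the $n$ variables $x_1,\dots,x_n$ is in one-to-one correspondence with the set $\mathfrak{G}(n)$ of equivalence classes of feature graphs on $n$ nodes under the reachability relation $\sim$; that is, there is a bijection $\mathcal{DM}(n)\to\mathfrak{G}(n)$.
   Context: A predictive model $y(\vec x)$ is a disjoint multilinear interaction expression (DMIE) if it can be written as $y(\vec{x}) = \sum_{i=1}^{k} \prod_{j=1}^{m_i} x_{i_j}$, where $x_{i_j}$ and $x_{k_l}$ are distinct variables whenever $i\neq k$ or $j\neq l$ (each variable occurs in at most one product, at most once). $\mathcal{DM}(n)$ denotes the set of all DMIE expressions of the $n$ variables $x_1,\dots,x_n$ (expressions are regarded as polynomial functions, so reordering factors or summands gives the same expression). A feature graph on $n$ nodes is a simple undirected graph with node set $N_n=\{1,\dots,n\}$, node $i$ corresponding to variable $x_i$; $\mathcal{G}(n)$ is the set of all such graphs. For $G_1,G_2\in\mathcal{G}(n)$, $G_1\sim G_2$ if for all $i,j\in N_n$, $i$ and $j$ are reachable from each other (connected by a path, a node being reachable from itself) in $G_1$ if and only if they are reachable in $G_2$. This is an equivalence relation, and $\mathfrak{G}(n)=\{[G]_\sim : G\in\mathcal{G}(n)\}$. *)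

From mathcomp Require Import all_boot all_order all_algebra.
From mathcomp Require Import reals.
Set Implicit Arguments. Unset Strict Implicit. Unset Printing Implicit Defensive.
Import Order.TTheory GRing.Theory Num.Theory.
Local Open Scope ring_scope.

(* A disjoint multilinear interaction expression in x_1..x_n, regarded as a
   polynomial function R^n -> R: it is determined by a family P of pairwise
   disjoint, nonempty sets of variable indices covering all n variables
   (a partition of 'I_n), and equals  x |-> \sum_(B in P) \prod_(i in B) x_i. *)
Definition dmie_of (R : realType) (n : nat) (P : {set {set 'I_n}})
  : ('I_n -> R) -> R :=
  fun x => \sum_(B in P) \prod_(i in B) x i.

Definition DM (R : realType) (n : nat) : (('I_n -> R) -> R) -> Prop :=
  fun f => exists P : {set {set 'I_n}},
      partition P [set: 'I_n] /\ f = @dmie_of R n P.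

Record feature_graph (n : nat) := FeatureGraph {
  fg_edge : rel 'I_n;
  fg_sym : symmetric fg_edge;
  fg_irr : irreflexive fg_edge }.

Definition reachable (n : nat) (G : feature_graph n) (i j : 'I_n) : bool :=
  connect (fg_edge G) i j.

Definition graph_equiv (n : nat) (G1 G2 : feature_graph n) : Prop :=
  forall i j : 'I_n, reachable G1 i j <-> reachable G2 i j.

Definition graph_class (n : nat) (G : feature_graph n) : feature_graph n -> Prop :=
  fun H => graph_equiv H G.

Definition Gfrak (n : nat) : (feature_graph n -> Prop) -> Prop :=
  fun C => exists G : feature_graph n, C = graph_class G.

(* Both sides are in bijection with the partitions of {1,...,n}.  Evaluating
   sum_(B in P) prod_(i in B) x_i at the 0/1 indicator vector of a set S counts
   the blocks of P contained in S, so the blocks of P are recovered from the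
   expression as the minimal sets on which it does not vanish.  On the graph
   side, a reachability class is determined by its partition into connected
   components, and every partition is the component partition of the graph
   joining distinct nodes of a common block. *)

From mathcomp Require Import all_boot all_order all_algebra.
From mathcomp Require Import reals.
From Stdlib Require Import ClassicalEpsilon FunctionalExtensionality.
From Stdlib Require Import PropExtensionality ProofIrrelevance.
Set Implicit Arguments. Unset Strict Implicit. Unset Printing Implicit Defensive.
Import Order.TTheory GRing.Theory Num.Theory.
Local Open Scope ring_scope.

Lemma inj_surj_bij (A B : Type) (f : A -> B) :
  injective f -> (forall b, exists a, f a = b) -> bijective f.
Proof.
move=> f_inj f_surj.
pose g b := proj1_sig (constructive_indefinite_description _ (f_surj b)).
have gK : cancel g f.
  by move=> b; exact: proj2_sig (constructive_indefinite_description _ (f_surj b)).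
by exists g => // a; apply: f_inj; rewrite gK.
Qed.

Section Partitions.
Variable T : finType.
Implicit Types (P Q : {set {set T}}) (B S D : {set T}).

Lemma partition_eq_pblock P Q D : partition P D -> partition Q D ->
    {in D &, forall x y, (pblock P x == pblock P y) = (pblock Q x == pblock Q y)} ->
  P = Q.
Proof.
move=> partP partQ samePQ.
rewrite -(preim_partition_pblock partP) -(preim_partition_pblock partQ).
apply: eq_in_imset => x Dx; apply/setP => y; rewrite !inE.
by case Dy: (y \in D); rewrite //= samePQ.
Qed.

Definition contains_block P S := [exists B in P, B \subset S].

Lemma partition_minset P D B :
  partition P D -> (B \in P) = minset (contains_block P) B.
Proof.
case/and3P => _ tiP notP0.
apply/idP/idP => [BP | /minsetP[/existsP[B' /andP[B'P B'B]] minB]].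
  apply/minsetP; split=> [|S /existsP[B' /andP[B'P B'S]] SB].
    by apply/existsP; exists B; rewrite BP subxx.
  have /set0Pn[x xB'] : B' != set0 by apply: contraNneq notP0 => <-.
  have xB : x \in B by apply: (subsetP SB); apply: (subsetP B'S).
  have eB'B : B' = B by rewrite -(def_pblock tiP B'P xB') (def_pblock tiP BP xB).
  by apply/eqP; rewrite eqEsubset SB -eB'B B'S.
suff <- : B' = B by [].
by apply: minB B'B; apply/existsP; exists B'; rewrite B'P subxx.
Qed.

Lemma partition_eq_contains_block P Q D : partition P D -> partition Q D ->
  contains_block P =1 contains_block Q -> P = Q.
Proof.
move=> partP partQ ePQ; apply/setP => B.
by rewrite (partition_minset B partP) (partition_minset B partQ); apply: minset_eq.
Qed.

End Partitions.

Notation setT_partition n := {P : {set {set 'I_n}} | partition P [set: 'I_n]}.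

Section DisjointMultilinearExpressions.
Variables (R : realType) (n : nat).
Implicit Types (P Q : {set {set 'I_n}}) (B S : {set 'I_n}).

Definition indicator S : 'I_n -> R := fun i => (i \in S)%:R.

Lemma prod_indicator B S : \prod_(i in B) indicator S i = (B \subset S)%:R.
Proof.
have [BS | /subsetPn[i iB iNS]] := boolP (B \subset S).
  by apply: big1 => i iB; rewrite /indicator (subsetP BS i iB).
by rewrite (bigD1 i) //= /indicator (negbTE iNS) mul0r.
Qed.

Lemma dmie_of_indicator_eq0 P S :
  (dmie_of P (indicator S) == 0) = ~~ contains_block P S.
Proof.
rewrite /dmie_of; under eq_bigr do rewrite prod_indicator.
rewrite -natr_sum pnatr_eq0 sum_nat_eq0 negb_exists.
by apply: eq_forallb => B; case: (B \in P); case: (B \subset S).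
Qed.

Lemma dmie_of_inj P Q : partition P [set: 'I_n] -> partition Q [set: 'I_n] ->
  dmie_of (R := R) P = dmie_of Q -> P = Q.
Proof.
move=> partP partQ ePQ; apply: (partition_eq_contains_block partP partQ) => S.
by apply: negb_inj; rewrite -!dmie_of_indicator_eq0 ePQ.
Qed.

Definition dmie_of_partition (P : setT_partition n) : {p | @DM R n p} :=
  exist _ (dmie_of (val P)) (ex_intro _ (val P) (conj (valP P) erefl)).

Lemma dmie_of_partition_bij : bijective dmie_of_partition.
Proof.
apply: inj_surj_bij => [[P partP] [Q partQ] /(congr1 (@proj1_sig _ _)) /= ePQ
                      | [p [P [partP epP]]]].
  by apply: val_inj; exact: dmie_of_inj ePQ.
by exists (exist _ P partP); apply: subset_eq_compat; rewrite epP.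
Qed.

End DisjointMultilinearExpressions.

Section FeatureGraphs.
Variable n : nat.
Implicit Types (G H : feature_graph n) (i j : 'I_n).

Section KernelGraph.
Variables (T : eqType) (f : 'I_n -> T).

Definition kernel_edge : rel 'I_n := fun i j => (i != j) && (f i == f j).

Lemma kernel_edge_sym : symmetric kernel_edge.
Proof. by move=> i j; rewrite /kernel_edge eq_sym (eq_sym (f i)). Qed.

Lemma kernel_edge_irr : irreflexive kernel_edge.
Proof. by move=> i; rewrite /kernel_edge eqxx. Qed.

Definition kernel_graph : feature_graph n :=
  FeatureGraph kernel_edge_sym kernel_edge_irr.

Lemma reachable_kernel_graph i j : reachable kernel_graph i j = (f i == f j).
Proof.
apply/idP/idP => [/connectP[p pth ->] | fij].
  elim: p i pth => [|k p IHp] i /=; first by rewrite eqxx.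
  by case/andP => /andP[_ /eqP->] /IHp.
have [<- | neq_ij] := eqVneq i j; first exact: connect0.
by apply: connect1; rewrite /= /kernel_edge neq_ij fij.
Qed.

End KernelGraph.

Lemma reachable_equiv G : {in [set: 'I_n] & &, equivalence_rel (reachable G)}.
Proof.
have reach_sym := sym_connect_sym (fg_sym G).
move=> i j k _ _ _; split=> [|Gij]; first exact: connect0.
by apply/idP/idP; apply: connect_trans; rewrite // reach_sym.
Qed.

Definition components G := equivalence_partition (reachable G) [set: 'I_n].

Lemma components_partition G : partition (components G) [set: 'I_n].
Proof. exact: equivalence_partitionP (reachable_equiv G). Qed.

Lemma same_pblock_components G i j :
  (pblock (components G) i == pblock (components G) j) = reachable G i j.
Proof.
case/and3P: (components_partition G) => /eqP cover_comp tiP _.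
rewrite eq_pblock ?cover_comp ?in_setT //.
by rewrite (pblock_equivalence_partition (reachable_equiv G)) ?in_setT.
Qed.

Lemma graph_class_eqE G H :
  graph_class G = graph_class H <-> reachable G =2 reachable H.
Proof.
split=> [eGH i j | eGH].
  have : graph_class H G by rewrite -eGH => k l.
  by move=> /(_ i j) [GH HG]; apply/idP/idP; [exact: GH | exact: HG].
apply: functional_extensionality => K.
by apply: propositional_extensionality; split=> eKG i j; rewrite eKG eGH.
Qed.

Definition class_of_partition (P : setT_partition n) : {C | @Gfrak n C} :=
  exist _ (graph_class (kernel_graph (pblock (val P)))) (ex_intro _ _ erefl).

Lemma class_of_partition_bij : bijective class_of_partition.
Proof.
apply: inj_surj_bij => [P Q /(congr1 (@proj1_sig _ _)) /graph_class_eqE ePQ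
                      | [C [G eCG]]].
  apply: val_inj; apply: partition_eq_pblock (valP P) (valP Q) _ => i j _ _.
  by rewrite -!reachable_kernel_graph ePQ.
exists (exist _ (components G) (components_partition G)).
apply: subset_eq_compat; rewrite eCG; apply/graph_class_eqE => i j.
by rewrite reachable_kernel_graph same_pblock_components.
Qed.

End FeatureGraphs.

Theorem theorem1 (R : realType) (n : nat) (hn : (0 < n)%N) :
  exists f : {p : ('I_n -> R) -> R | @DM R n p} -> {C | @Gfrak n C},
    bijective f.
Proof.
have [dmie_inv dmieK _] := dmie_of_partition_bij R n.
exists (@class_of_partition n \o dmie_inv).
apply: bij_comp (class_of_partition_bij n) _.
exact: bij_can_bij (dmie_of_partition_bij R n) _ dmieK.
Qed.
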